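(* Let $\mathcal{X}$, $f_i$, $\underline{y},\overline{y}$ be as in the context, and consider problem (SCP): $\min_{(y,x)\in\mathcal{X}}\sum_{i=1}^{n_y}f_i(y_i)+\sum_{\omega\in\Omega_1}p_\omega c_\omega^Tx_\omega$. Run the adaptive piecewise linear approximation algorithm described in the context, and assume that in every iteration $s$ the subproblem in step 3 is solved to an optimal solution $(\tilde{y}^s,\tilde{x}^s)$ that is an extreme point of $\mathcal{X}(\tilde{y}^s)=\{(y,x)\in\mathcal{X}: y_i=\tilde{y}^s_i\ \forall i\le n_{\mathrm{I}}\}$. Then the algorithm terminates after finitely many iterations, and the point it returns is a global optimum of (SCP).
   Context: Let $\Omega_1$ be a finite index set, $n_y\geq n_{\mathrm{I}}\geq0$ integers, $A\in\mathbb{R}^{m_1\times n_y}$, $b\in\mathbb{R}^{m_1}$, $D\in\mathbb{R}^{m_2\times n_y}$, and for each $\omega\in\Omega_1$: $p_\omega\in\mathbb{R}$, $c_\omega\in\mathbb{R}^{n_x}$, $B_\omega\in\mathbb{R}^{m_2\times n_x}$, $d_\omega\in\mathbb{R}^{m_2}$. $\mathcal{X}=\{(y,\{x_\omega\}_{\omega\in\Omega_1})\geq0: y\in\mathbb{Z}^{n_{\mathrm{I}}}\times\mathbb{R}^{n_y-n_{\mathrm{I}}},\ Ay=b,\ B_\omega x_\omega+Dy=d_\omega\ \forall\omega\}$ is assumed nonempty and bounded, with vectors $\underline{y},\overline{y}$ such that $\underline{y}\leq y\leq\overline{y}$ for all $(y,x)\in\mathcal{X}$. It is also assumed that for every $y\geq0$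 with $y\in\mathbb{Z}^{n_{\mathrm{I}}}\times\mathbb{R}^{n_y-n_{\mathrm{I}}}$ and $Ay=b$, and every $\omega$, the set $\{x\geq0:B_\omega x=d_\omega-Dy\}$ is nonempty. The $f_i:\mathbb{R}\to\mathbb{R}$ are concave and lower semicontinuous. Given breakpoints $y_i^{(1)}<\dots<y_i^{(k_i)}$, the piecewise linear function $\overline{f}_i$ on $[y_i^{(1)},y_i^{(k_i)}]$ is $\overline{f}_i(y_i)=\frac{f_i(y_i^{(j+1)})-f_i(y_i^{(j)})}{y_i^{(j+1)}-y_i^{(j)}}(y_i-y_i^{(j)})+f_i(y_i^{(j)})$ for $y_i\in[y_i^{(j)},y_i^{(j+1)}]$. Algorithm: (1) For each $i$ set breakpoints $(y_i^{(1)},y_i^{(2)})=(\underline{y}_i,\overline{y}_i)$, $k_i=2$; set $s=1$. (2) For each $i$ construct $\overline{f}^s_i$ from the current breakpoints. (3) Solve $\min_{(y,x)\in\mathcal{X}}\sum_i\overline{f}^s_i(y_i)+\sum_\omega p_\omega c_\omega^Tx_\omega$ to an optimal solution $(\tilde{y}^s,\{\tilde{x}^s_\omega\})$. (4) If $\overline{f}^s_i(\tilde{y}^s_i)\geq f_i(\tilde{y}^s_i)$ for all $i$, stop and return $(\tilde{y}^s,\{\tilde{x}^s_\omega\})$. (5) Otherwise, for each $i$ with $\overline{f}^s_i(\tilde{y}^s_i)<f_i(\tilde{y}^s_i)$, add $\tilde{y}^s_i$ as a new breakpoint ($k_i\leftarrow k_i+1$) and re-sort the breakpoints increasingly. (6)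 Set $s\leftarrow s+1$ and go to (2). *)

From HB Require Import structures.
From mathcomp Require Import all_boot all_order all_algebra.
From mathcomp Require Import reals.
Set Implicit Arguments. Unset Strict Implicit. Unset Printing Implicit Defensive.
Import Order.TTheory GRing.Theory Num.Theory.
Local Open Scope ring_scope.

Section Defs.
Variable R : realType.

Definition concave (f : R -> R) : Prop :=
  forall a b t, 0 <= t -> t <= 1 -> t * f a + (1 - t) * f b <= f (t * a + (1 - t) * b).

Definition lsc (f : R -> R) : Prop :=
  forall x e, 0 < e -> exists2 d, 0 < d & forall y, `|y - x| < d -> f x - e < f y.

(* Piecewise linear interpolant of f through the sorted breakpoints
   [:: y1; y2; ...; yk]: on [y_j, y_(j+1)] it is the chord of f between
   y_j and y_(j+1). (Values outside [y1, yk] are irrelevant: an arbitrary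
   extension is used.) *)
Fixpoint pwl (f : R -> R) (s : seq R) (y : R) : R :=
  match s with
  | a :: ((b :: _) as t) =>
      if y <= b then (f b - f a) / (b - a) * (y - a) + f a else pwl f t y
  | _ => f y
  end.

Definition inX (Om : finType) (ny nI nx m1 m2 : nat)
  (A : 'M[R]_(m1, ny)) (b : 'cV[R]_m1) (D : 'M[R]_(m2, ny))
  (B : Om -> 'M[R]_(m2, nx)) (d : Om -> 'cV[R]_m2)
  (y : 'cV[R]_ny) (x : Om -> 'cV[R]_nx) : Prop :=
  [/\ forall i : 'I_ny, 0 <= y i 0,
      forall w j, 0 <= x w j 0,
      forall i : 'I_ny, (i < nI)%N -> y i 0 \is a Num.int,
      A *m y = b &
      forall w, B w *m x w + D *m y = d w].

Definition inXfix (Om : finType) (ny nI nx m1 m2 : nat)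
  (A : 'M[R]_(m1, ny)) (b : 'cV[R]_m1) (D : 'M[R]_(m2, ny))
  (B : Om -> 'M[R]_(m2, nx)) (d : Om -> 'cV[R]_m2) (yt : 'cV[R]_ny)
  (y : 'cV[R]_ny) (x : Om -> 'cV[R]_nx) : Prop :=
  inX nI A b D B d y x /\ forall i : 'I_ny, (i < nI)%N -> y i 0 = yt i 0.

Definition extreme_point (Om : finType) (ny nx : nat)
  (S : 'cV[R]_ny -> (Om -> 'cV[R]_nx) -> Prop)
  (y : 'cV[R]_ny) (x : Om -> 'cV[R]_nx) : Prop :=
  S y x /\
  forall y1 x1 y2 x2 t, S y1 x1 -> S y2 x2 -> 0 < t -> t < 1 ->
    y = t *: y1 + (1 - t) *: y2 ->
    (forall w, x w = t *: x1 w + (1 - t) *: x2 w) ->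
    y1 = y /\ y2 = y /\ (forall w, x1 w = x w /\ x2 w = x w).

Definition second_cost (Om : finType) (nx : nat) (p : Om -> R)
  (c : Om -> 'cV[R]_nx) (x : Om -> 'cV[R]_nx) : R :=
  \sum_(w : Om) p w * \sum_(j < nx) c w j 0 * x w j 0.

Definition scp_obj (Om : finType) (ny nx : nat) (f : 'I_ny -> R -> R)
  (p : Om -> R) (c : Om -> 'cV[R]_nx) (y : 'cV[R]_ny) (x : Om -> 'cV[R]_nx) : R :=
  \sum_(i < ny) f i (y i 0) + second_cost p c x.

Definition approx_obj (Om : finType) (ny nx : nat) (f : 'I_ny -> R -> R)
  (bp : 'I_ny -> seq R)
  (p : Om -> R) (c : Om -> 'cV[R]_nx) (y : 'cV[R]_ny) (x : Om -> 'cV[R]_nx) : R :=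
  \sum_(i < ny) pwl (f i) (bp i) (y i 0) + second_cost p c x.

Definition stop_test (ny : nat) (f : 'I_ny -> R -> R) (bp : 'I_ny -> seq R)
  (y : 'cV[R]_ny) : Prop :=
  forall i, f i (y i 0) <= pwl (f i) (bp i) (y i 0).

Definition update_bp (ny : nat) (f : 'I_ny -> R -> R) (bp : 'I_ny -> seq R)
  (y : 'cV[R]_ny) (i : 'I_ny) : seq R :=
  if pwl (f i) (bp i) (y i 0) < f i (y i 0)
  then sort <=%R (y i 0 :: bp i) else bp i.

End Defs.

(* For concave f_i, the chord interpolant through sorted breakpoints that contain
   ylo_i and yhi_i underestimates f_i on [ylo_i, yhi_i] and is exact at the breakpoints.
   Hence, once the stopping test holds, the subproblem objective agrees with the true
   one at the subproblem optimum and underestimates it everywhere, so that point is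
   globally optimal.
   For termination: if two points of X have the same support and the same integer
   coordinates, moving from the first one a little along their difference, in both
   directions, stays in X(y); so an extreme point of X(y) is determined by this
   pattern, and boundedness of X leaves finitely many patterns. The iterates thus take
   finitely many values and every breakpoint is a bound or an earlier iterate, while an
   iteration that does not stop adds a breakpoint not present before (the interpolant
   is exact at the old ones): the number of distinct breakpoints cannot grow forever. *)

From HB Require Import structures.
From mathcomp Require Import all_boot all_order all_algebra.
From mathcomp Require Import reals.
From mathcomp Require Import ring lra.
From Stdlib Require Import Classical.
Set Implicit Arguments. Unset Strict Implicit. Unset Printing Implicit Defensive.
Import Order.TTheory GRing.Theory Num.Theory.
Local Open Scope ring_scope.

Section ConcaveInterpolation.
Variable R : realType.
Implicit Types (f : R -> R) (l : seq R) (a b y : R).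

Lemma concave_chord_le f a b y : concave f -> a <= y <= b ->
  (f b - f a) / (b - a) * (y - a) + f a <= f y.
Proof.
move=> f_concave /andP[ay yb].
have [eq_ab|neq_ab] := eqVneq a b.
  have -> : y = a by apply/eqP; rewrite eq_le ay eq_ab yb.
  by rewrite subrr mulr0 add0r.
have ba_gt0 : 0 < b - a by rewrite subr_gt0 lt_neqAle neq_ab (le_trans ay yb).
have ba_neq0 : b - a != 0 by rewrite gt_eqF.
set t := (b - y) / (b - a).
have t_ge0 : 0 <= t by apply: divr_ge0; lra.
have t_le1 : t <= 1 by rewrite ler_pdivrMr //; lra.
have := f_concave a b t t_ge0 t_le1.
have -> : t * a + (1 - t) * b = y by rewrite /t; field.
suff -> : (f b - f a) / (b - a) * (y - a) + f a = t * f a + (1 - t) * f b by [].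
by rewrite /t; field.
Qed.

Lemma pwl_le_concave f l lo hi y : concave f -> sorted <=%R l ->
  lo \in l -> hi \in l -> lo <= y <= hi -> pwl f l y <= f y.
Proof.
case: l => [//|a l] f_concave sorted_l lo_in hi_in /andP[lo_y y_hi].
have a_y : a <= y.
  move: lo_in; rewrite in_cons => /predU1P[<-//|lo_in].
  by apply: le_trans lo_y; have /allP := order_path_min le_trans sorted_l; apply.
elim: l a sorted_l a_y hi_in {lo_in} => [//|b l IH] a /= /andP[ab sorted_l] a_y.
rewrite in_cons => /predU1P hi_in.
case: ifP => [y_b|/negbT]; first by apply: concave_chord_le => //; rewrite a_y.
rewrite -ltNge => b_y; apply: IH => //; first exact: ltW.
case: hi_in => [hi_a|//]; suff : b < b by rewrite ltxx.
by rewrite (lt_le_trans b_y) // (le_trans y_hi) // hi_a.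
Qed.

Lemma pwl_breakpoint f l y : sorted <=%R l -> y \in l -> pwl f l y = f y.
Proof.
case: l => [//|a l]; elim: l a => [//|b l IH] a /= /andP[ab sorted_l].
rewrite in_cons => /predU1P y_in.
case: ifP => y_b; last first.
  by apply: IH => //; case: y_in => // y_a; move: y_b; rewrite y_a ab.
case: y_in => [->|y_in]; first by rewrite subrr mulr0 add0r.
have -> : y = b.
  apply/eqP; rewrite eq_le y_b /=.
  move: y_in; rewrite in_cons => /predU1P[->|y_l]; first exact: lexx.
  by have /allP := order_path_min le_trans sorted_l; apply.
have [->|neq_ba] := eqVneq b a; first by rewrite !subrr mulr0 add0r.
by field; rewrite subr_eq0.
Qed.

End ConcaveInterpolation.

Section Refinement.
Variables (R : realType) (ny : nat) (f : 'I_ny -> R -> R) (bp : 'I_ny -> seq R).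
Variables (y : 'cV[R]_ny) (i : 'I_ny).
Local Notation refined := (pwl (f i) (bp i) (y i 0) < f i (y i 0)).

Lemma sorted_update_bp : sorted <=%R (bp i) -> sorted <=%R (update_bp f bp y i).
Proof.
by rewrite /update_bp; case: ifP => // _ _; apply: sort_sorted; exact: le_total.
Qed.

Lemma mem_update_bp z : (z \in update_bp f bp y i) =
  (z \in bp i) || refined && (z == y i 0).
Proof.
rewrite /update_bp; case: ifP => _ /=; last by rewrite orbF.
by rewrite mem_sort in_cons orbC.
Qed.

Lemma size_undup_update_bp : sorted <=%R (bp i) ->
  size (undup (update_bp f bp y i)) = (size (undup (bp i)) + refined)%N.
Proof.
move=> sorted_bp; rewrite /update_bp; case: ifPn => [lt_pwl|_]; last by rewrite addn0.
rewrite (perm_size (perm_undup (mem_sort _ _))) /= ifF ?addn1 //.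
apply/negP => /(pwl_breakpoint (f i) sorted_bp) pwl_eq.
by move: lt_pwl; rewrite pwl_eq ltxx.
Qed.

End Refinement.

Lemma scp_obj_le_of_stop_test (R : realType) (Om : finType) (ny nx : nat)
    (f : 'I_ny -> R -> R) (bp : 'I_ny -> seq R) (p : Om -> R) (c : Om -> 'cV[R]_nx)
    (ylo yhi y y' : 'cV[R]_ny) (x x' : Om -> 'cV[R]_nx) :
  (forall i, concave (f i)) ->
  (forall i, [/\ sorted <=%R (bp i), ylo i 0 \in bp i & yhi i 0 \in bp i]) ->
  stop_test f bp y -> approx_obj f bp p c y x <= approx_obj f bp p c y' x' ->
  (forall i, ylo i 0 <= y' i 0 <= yhi i 0) ->
  scp_obj f p c y x <= scp_obj f p c y' x'.
Proof.
move=> f_concave bp_ok stop approx_le y'_range.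
apply: le_trans (le_trans approx_le _); rewrite lerD2r; apply: ler_sum => i _.
  exact: stop.
have [sorted_bp lo_in hi_in] := bp_ok i.
exact: pwl_le_concave (f_concave i) sorted_bp lo_in hi_in (y'_range i).
Qed.

Section ExtremePoints.
Variables (R : realType) (Om : finType) (ny nI nx m1 m2 : nat).
Variables (A : 'M[R]_(m1, ny)) (b : 'cV[R]_m1) (D : 'M[R]_(m2, ny)).
Variables (B : Om -> 'M[R]_(m2, nx)) (d : Om -> 'cV[R]_m2).
Local Notation X := (inX nI A b D B d).
Local Notation Xfix := (inXfix nI A b D B d).

Lemma extreme_point_dir_eq0 (S : 'cV[R]_ny -> (Om -> 'cV[R]_nx) -> Prop) y x dy dx e :
  extreme_point S y x -> e != 0 ->
  S (y + e *: dy) (fun w => x w + e *: dx w) ->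
  S (y + (- e) *: dy) (fun w => x w + (- e) *: dx w) -> dy = 0.
Proof.
move=> [_ extreme] e_neq0 S_plus S_minus.
have half_gt0 : (0 : R) < 2^-1 by rewrite invr_gt0.
have half_lt1 : (2^-1 : R) < 1 by rewrite invf_lt1 // ltr1n.
have midpoint (V : lmodType R) (v dv : V) :
    v = 2^-1 *: (v + e *: dv) + (1 - 2^-1) *: (v + (- e) *: dv).
  have -> : 1 - 2^-1 = 2^-1 :> R by field.
  rewrite -scalerDr scaleNr addrACA subrr addr0 -mulr2n -scaler_nat scalerA.
  by rewrite mulVf ?scale1r ?pnatr_eq0.
have [+ _] := extreme _ _ _ _ _ S_plus S_minus half_gt0 half_lt1 (midpoint _ _ _)
  (fun w => midpoint _ _ _).
by rewrite -[RHS]addr0 => /addrI/eqP; rewrite scaler_eq0 (negbTE e_neq0) => /eqP.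
Qed.

Lemma nonneg_perturb (T : finType) (u v : T -> R) :
  (forall j, 0 <= u j) -> (forall j, 0 <= v j) -> (forall j, (u j == 0) = (v j == 0)) ->
  exists2 e, 0 < e & forall k j, `|k| <= e -> 0 <= u j + k * (u j - v j).
Proof.
move=> u_ge0 v_ge0 same_zeros.
pose g j := if u j == 0 then 1 else u j / (u j + v j).
have g_gt0 j : 0 < g j.
  rewrite /g; case: eqP => [//|/eqP u_neq0].
  have u_gt0 : 0 < u j by rewrite lt_neqAle eq_sym u_neq0 u_ge0.
  by rewrite divr_gt0 // ltr_pwDl.
exists (\big[Num.min/1]_j g j); first by apply: lt_bigmin.
move=> k j /le_trans/(_ (bigmin_le _ j g)); rewrite /g.
have := same_zeros j; case: eqP => [-> /esym/eqP ->|/eqP u_neq0 _].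
  by rewrite !subrr mulr0 addr0.
have u_gt0 : 0 < u j by rewrite lt_neqAle eq_sym u_neq0 u_ge0.
rewrite ler_pdivlMr ?ltr_pwDl //.
have := v_ge0 j; case: (ler0P k) => [k_le0|k_gt0]; nra.
Qed.

Lemma inXfix_extrapolate y1 x1 y2 x2 k : X y1 x1 -> X y2 x2 ->
  (forall i : 'I_ny, (i < nI)%N -> y2 i 0 = y1 i 0) ->
  (forall j, 0 <= y1 j 0 + k * (y1 j 0 - y2 j 0)) ->
  (forall w j, 0 <= x1 w j 0 + k * (x1 w j 0 - x2 w j 0)) ->
  Xfix y1 (y1 + k *: (y1 - y2)) (fun w => x1 w + k *: (x1 w - x2 w)).
Proof.
move=> [_ _ y1_int Ay1 By1] [_ _ _ Ay2 By2] same_int y_ge0 x_ge0.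
have fixed (i : 'I_ny) : (i < nI)%N -> (y1 + k *: (y1 - y2)) i 0 = y1 i 0.
  by move=> lt_i; rewrite !mxE same_int // subrr mulr0 addr0.
split=> //; split.
- by move=> j; rewrite !mxE.
- by move=> w j; rewrite !mxE.
- by move=> i lt_i; rewrite fixed // y1_int.
- by rewrite mulmxDr -scalemxAr mulmxBr Ay1 Ay2 subrr scaler0 addr0.
- move=> w; rewrite !mulmxDr -!scalemxAr !mulmxBr addrACA -scalerDr.
  by rewrite addrACA -opprD By1 By2 subrr scaler0 addr0.
Qed.

Lemma extreme_point_support_eq y1 x1 y2 x2 :
  extreme_point (Xfix y1) y1 x1 -> X y2 x2 ->
  (forall i : 'I_ny, (i < nI)%N -> y2 i 0 = y1 i 0) ->
  (forall j, (y1 j 0 == 0) = (y2 j 0 == 0)) ->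
  (forall w j, (x1 w j 0 == 0) = (x2 w j 0 == 0)) -> y1 = y2.
Proof.
move=> extreme X2 same_int same_ysupp same_xsupp.
have [[X1 _] _] := extreme.
have [[y1_ge0 x1_ge0 _ _ _] [y2_ge0 x2_ge0 _ _ _]] := (X1, X2).
have [ey ey_gt0 y_perturb] := nonneg_perturb y1_ge0 y2_ge0 same_ysupp.
have [ex ex_gt0 x_perturb] := @nonneg_perturb _ (fun wj => x1 wj.1 wj.2 0)
  (fun wj => x2 wj.1 wj.2 0) (fun _ => x1_ge0 _ _) (fun _ => x2_ge0 _ _)
  (fun _ => same_xsupp _ _).
pose e := Num.min ey ex.
have e_gt0 : 0 < e by rewrite lt_min ey_gt0 ex_gt0.
have perturb_in k : `|k| <= e ->
    Xfix y1 (y1 + k *: (y1 - y2)) (fun w => x1 w + k *: (x1 w - x2 w)).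
  rewrite le_min => /andP[k_ey k_ex].
  apply: inXfix_extrapolate => // [j|w j]; first exact: y_perturb.
  exact: (x_perturb _ (w, j)).
apply/eqP; rewrite -subr_eq0; apply/eqP.
apply: (extreme_point_dir_eq0 extreme (lt0r_neq0 e_gt0) (perturb_in e _)
  (perturb_in (- e) _)).
  by rewrite gtr0_norm.
by rewrite normrN gtr0_norm.
Qed.

Definition support_pattern (N : nat) (y : 'cV[R]_ny) (x : Om -> 'cV[R]_nx) :
    {set 'I_ny} * {set Om * 'I_nx} * {ffun 'I_ny -> 'I_N.+1} :=
  ([set j | y j 0 != 0], [set wj | x wj.1 wj.2 0 != 0],
   [ffun i => inord (Num.truncn (y i 0))]).

Lemma support_pattern_extreme_eq N y1 x1 y2 x2 :
  extreme_point (Xfix y1) y1 x1 -> X y2 x2 ->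
  (forall i, y1 i 0 <= N%:R) -> (forall i, y2 i 0 <= N%:R) ->
  support_pattern N y1 x1 = support_pattern N y2 x2 -> y1 = y2.
Proof.
move=> extreme X2 y1_le y2_le [/setP same_ysupp /setP same_xsupp /ffunP same_int].
have [[[y1_ge0 _ y1_int _ _] _] _] := extreme; have [y2_ge0 _ y2_int _ _] := X2.
apply: (extreme_point_support_eq extreme X2) => [i lt_i|j|w j].
- have trunc_le (y : R) : y <= N%:R -> (Num.truncn y <= N)%N.
    by move/le_truncn; rewrite natrK.
  have := congr1 val (same_int i).
  rewrite !ffunE /= !inordK ?ltnS ?trunc_le // => eq_trunc.
  have nat1 : y1 i 0 \is a Num.nat by rewrite natrEint y1_int ?y1_ge0.
  have nat2 : y2 i 0 \is a Num.nat by rewrite natrEint y2_int ?y2_ge0.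
  by rewrite -(truncnK nat1) -(truncnK nat2) eq_trunc.
- by apply: negb_inj; have := same_ysupp j; rewrite !inE.
- by apply: negb_inj; have := same_xsupp (w, j); rewrite !inE.
Qed.

End ExtremePoints.

Lemma size_undup_map_le (I T1 T2 : eqType) (g1 : I -> T1) (g2 : I -> T2) (l : seq I) :
  {in l &, forall a b, g1 a = g1 b -> g2 a = g2 b} ->
  (size (undup (map g2 l)) <= size (undup (map g1 l)))%N.
Proof.
elim: l => [//|a l IH] g12 /=.
have l_sub : {subset l <= a :: l} by move=> t t_l; rewrite in_cons t_l orbT.
have {}IH := IH (sub_in2 l_sub g12).
have [/mapP[t t_l g1_eq]|_] := boolP (g1 a \in map g1 l); last first.
  by case: ifP => _ //=; exact: leqW.
rewrite ifT //; apply/mapP; exists t => //.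
by apply: g12; rewrite ?in_cons ?t_l ?eqxx ?orbT.
Qed.

Section Run.
Variables (R : realType) (Om : finType) (ny nI nx m1 m2 : nat).
Variables (A : 'M[R]_(m1, ny)) (b : 'cV[R]_m1) (D : 'M[R]_(m2, ny)).
Variables (B : Om -> 'M[R]_(m2, nx)) (d : Om -> 'cV[R]_m2).
Variables (f : 'I_ny -> R -> R) (ylo yhi : 'cV[R]_ny) (M : R).
Variables (bp : nat -> 'I_ny -> seq R) (ys : nat -> 'cV[R]_ny).
Variable xs : nat -> Om -> 'cV[R]_nx.
Local Notation X := (inX nI A b D B d).
Local Notation stopped t := (stop_test f (bp t) (ys t)).
Local Notation running s := (forall t, (t < s)%N -> ~ stopped t).
Local Notation refined s i := (pwl (f i) (bp s i) (ys s i 0) < f i (ys s i 0)).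

Hypothesis ylo_le_yhi : forall i, ylo i 0 <= yhi i 0.
Hypothesis X_bounded : forall y x, X y x -> forall i, `|y i 0| <= M.
Hypothesis bp0 : forall i, bp 0%N i = [:: ylo i 0; yhi i 0].
Hypothesis bp_next : forall s, (forall t, (t <= s)%N -> ~ stopped t) ->
  forall i, bp s.+1 i = update_bp f (bp s) (ys s) i.
Hypothesis ys_extreme : forall s, running s ->
  extreme_point (inXfix nI A b D B d (ys s)) (ys s) (xs s).

Lemma running_le s t : (t <= s)%N -> running s -> running t.
Proof. by move=> le_ts run_s u lt_ut; apply: run_s; exact: leq_trans lt_ut le_ts. Qed.

Lemma bp_sorted_bounds s : running s ->
  forall i, [/\ sorted <=%R (bp s i), ylo i 0 \in bp s i & yhi i 0 \in bp s i].
Proof.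
elim: s => [_ i|s IH run_s i].
  by rewrite bp0 !inE !eqxx orbT /= andbT ylo_le_yhi.
have [sorted_bp lo_in hi_in] := IH (running_le (leqnSn s) run_s) i.
rewrite bp_next //; split; first exact: sorted_update_bp.
  by rewrite mem_update_bp lo_in.
by rewrite mem_update_bp hi_in.
Qed.

Lemma bp_sub_values s i : running s ->
  {subset bp s i <= ylo i 0 :: yhi i 0 :: [seq ys t i 0 | t <- iota 0 s]}.
Proof.
elim: s => [_|s IH run_s] z; first by rewrite bp0.
rewrite bp_next // mem_update_bp -[s.+1]addn1 iotaD map_cat -!cat_cons mem_cat.
case/orP => [/(IH (running_le (leqnSn s) run_s)) -> //|/andP[_ /eqP ->]].
apply/orP; right; apply: (map_f (fun t => ys t i 0)).
by rewrite mem_iota add0n addn1 leqnn ltnSn.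
Qed.

Definition num_breakpoints s := (\sum_(i < ny) size (undup (bp s i)))%N.

Lemma num_breakpoints_ltS s :
  running s.+1 -> (num_breakpoints s < num_breakpoints s.+1)%N.
Proof.
move=> run_s; have run_prev := running_le (leqnSn s) run_s.
have [i0 refined_i0] : exists i, refined s i.
  apply: NNPP => not_refined; apply: (run_s s (ltnSn s)) => i.
  by rewrite leNgt; apply/negP => refined_i; apply: not_refined; exists i.
have size_next i : size (undup (bp s.+1 i)) = (size (undup (bp s i)) + refined s i)%N.
  have [sorted_bp _ _] := bp_sorted_bounds run_prev i.
  by rewrite bp_next // size_undup_update_bp.
rewrite /num_breakpoints (eq_bigr _ (fun i _ => size_next i)) big_split /=.
by rewrite -[n in (n < _)%N]addn0 ltn_add2l (bigD1 i0) //= refined_i0.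
Qed.

Lemma num_breakpoints_ge s : running s -> (s <= num_breakpoints s)%N.
Proof.
elim: s => [//|s IH run_s].
exact: leq_ltn_trans (IH (running_le (leqnSn s) run_s)) (num_breakpoints_ltS run_s).
Qed.

Local Notation N := (Num.truncn M).+1.
Local Notation pattern := ({set 'I_ny} * {set Om * 'I_nx} * {ffun 'I_ny -> 'I_N.+1})%type.

Lemma ys_le_bound t : running t -> forall i, ys t i 0 <= N%:R.
Proof.
move=> run_t i; have [[X_t _] _] := ys_extreme run_t.
by rewrite (le_trans (ler_norm _)) // (le_trans (X_bounded X_t i)) // ltW // truncnS_gt.
Qed.

Lemma num_breakpoints_bounded s :
  running s -> (num_breakpoints s <= ny * #|{: pattern}|.+2)%N.
Proof.
move=> run_s; rewrite /num_breakpoints -[n in (n * _)%N]card_ord -sum_nat_const.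
apply: leq_sum => i _.
set vals := undup [seq ys t i 0 | t <- iota 0 s].
have vals_le : (size vals <= #|{: pattern}|)%N.
  pose key t := support_pattern N (ys t) (xs t).
  apply: (leq_trans (size_undup_map_le (g1 := key) _)).
    move=> t1 t2; rewrite !mem_iota /= => lt1 lt2 same_key.
    have run1 := running_le (ltnW lt1) run_s; have run2 := running_le (ltnW lt2) run_s.
    have [[X2 _] _] := ys_extreme run2.
    by rewrite (support_pattern_extreme_eq (ys_extreme run1) X2 (ys_le_bound run1)
      (ys_le_bound run2) same_key).
  by rewrite -(card_uniqP (undup_uniq _)) max_card.
apply: (@leq_trans (size [:: ylo i 0, yhi i 0 & vals])); last by rewrite /= !ltnS.
apply: uniq_leq_size (undup_uniq _) _ => z; rewrite mem_undup => /(bp_sub_values run_s).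
by rewrite !inE mem_undup.
Qed.

Lemma run_terminates : exists s, stopped s /\ running s.
Proof.
apply: NNPP => no_first_stop.
have run s : running s.
  elim/ltn_ind: s => s IH t lt_ts stop_t.
  by apply: no_first_stop; exists t; split => //; exact: IH.
set C := (ny * #|{: pattern}|.+2)%N.
have := leq_trans (num_breakpoints_ge (run C.+1)) (num_breakpoints_bounded (run C.+1)).
by rewrite ltnn.
Qed.

End Run.

Theorem theorem3 (R : realType) (Om : finType) (ny nI nx m1 m2 : nat)
  (A : 'M[R]_(m1, ny)) (b : 'cV[R]_m1) (D : 'M[R]_(m2, ny))
  (p : Om -> R) (c : Om -> 'cV[R]_nx) (B : Om -> 'M[R]_(m2, nx))
  (d : Om -> 'cV[R]_m2) (f : 'I_ny -> R -> R) (ylo yhi : 'cV[R]_ny)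
  (bp : nat -> 'I_ny -> seq R) (ys : nat -> 'cV[R]_ny)
  (xs : nat -> Om -> 'cV[R]_nx) :
  (nI <= ny)%N ->
  (* X nonempty and bounded *)
  (exists y x, inX nI A b D B d y x) ->
  (exists M : R, forall y x, inX nI A b D B d y x ->
      (forall i, `|y i 0| <= M) /\ (forall w j, `|x w j 0| <= M)) ->
  (forall y x, inX nI A b D B d y x -> forall i, ylo i 0 <= y i 0 <= yhi i 0) ->
  (* relatively complete recourse *)
  (forall y : 'cV[R]_ny, (forall i, 0 <= y i 0) ->
      (forall i : 'I_ny, (i < nI)%N -> y i 0 \is a Num.int) -> A *m y = b ->
      forall w, exists x : 'cV[R]_nx, (forall j, 0 <= x j 0) /\ B w *m x = d w - D *m y) ->
  (forall i, concave (f i)) -> (forall i, lsc (f i)) ->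
  (* step 1 *)
  (forall i, bp 0%N i = [:: ylo i 0; yhi i 0]) ->
  (* step 3: optimal solution which is an extreme point of X(ys s) *)
  (forall s : nat, (forall t, (t < s)%N -> ~ stop_test f (bp t) (ys t)) ->
     [/\ inX nI A b D B d (ys s) (xs s),
         (forall y x, inX nI A b D B d y x ->
            approx_obj f (bp s) p c (ys s) (xs s) <= approx_obj f (bp s) p c y x) &
         extreme_point (inXfix nI A b D B d (ys s)) (ys s) (xs s)]) ->
  (* steps 4-6: if the stopping test fails, refine the breakpoints *)
  (forall s : nat, (forall t, (t <= s)%N -> ~ stop_test f (bp t) (ys t)) ->
     forall i, bp s.+1 i = update_bp f (bp s) (ys s) i) ->
  (* conclusion: finite termination, and the returned point is a global optimum *)
  exists s : nat,
    [/\ stop_test f (bp s) (ys s),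
        (forall t, (t < s)%N -> ~ stop_test f (bp t) (ys t)),
        inX nI A b D B d (ys s) (xs s) &
        forall y x, inX nI A b D B d y x ->
          scp_obj f p c (ys s) (xs s) <= scp_obj f p c y x].
Proof.
move=> _ [y0 [x0 X0]] [M X_bounded] y_range _ f_concave _ bp0 ys_solves bp_next.
have ylo_le_yhi i : ylo i 0 <= yhi i 0.
  by have /andP[] := y_range _ _ X0 i; exact: le_trans.
have ys_extreme s run_s := let: And3 _ _ extreme := ys_solves s run_s in extreme.
have [s [stop_s run_s]] := run_terminates ylo_le_yhi
  (fun y x X => (X_bounded y x X).1) bp0 bp_next ys_extreme.
have [X_s opt_s _] := ys_solves s run_s.
exists s; split => // y x X_yx.
apply: (scp_obj_le_of_stop_test f_concave _ stop_s (opt_s y x X_yx) (y_range y x X_yx)).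
exact: (bp_sorted_bounds ylo_le_yhi bp0 bp_next run_s).
Qed.
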